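(* Let $\alpha$ be a partial action datum of $M$ on $X\in\mathscr{C}$, $\alpha(m)=[\operatorname{dom}\alpha_m,\iota_m,\alpha_m]$. Assume $\alpha$ has a reflection $\iota\colon\alpha\to\beta$ in $\mathrm{Act}_M(\mathscr{C})$, where $\beta$ is a global action of $M$ on $Y\in\mathscr{C}$. Then the following are equivalent: (i) $(\beta,\iota)$ is a globalization of $\alpha$; (ii) $(\beta,\iota)$ is a universal globalization of $\alpha$; (iii) $\alpha$ has a universal globalization; (iv) $\alpha$ has a globalization; (v) for every $m\in M$ the commutative square with $\iota_m\colon\operatorname{dom}\alpha_m\to X$, $\alpha_m\colon\operatorname{dom}\alpha_m\to X$, $\beta_m\circ\iota\colon X\to Y$ and $\iota\colon X\to Y$ (i.e. $\beta_m\circ\iota\circ\iota_m=\iota\circ\alpha_m$) is a pullback in $\mathscr{C}$.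
   Context: Standing assumptions: $M$ is a monoid with identity $e$ and $\mathscr{C}$ is a category with pullbacks. A span from $X$ to $Y$ is a triple $(A,f,g)$ with $f\colon A\to X$, $g\colon A\to Y$; spans $(A,f,g)$, $(B,h,k)$ are isomorphic if there is an isomorphism $\varphi\colon A\to B$ with $h\circ\varphi=f$, $k\circ\varphi=g$; $[A,f,g]$ denotes the isomorphism class. A partial morphism is a span with $f$ a monomorphism; $\mathrm{pa}_{\mathscr{C}}(X,Y)$ is the class of their isomorphism classes. A partial action datum of $M$ on $X$ is a map $\alpha\colon M\to\mathrm{pa}_{\mathscr{C}}(X,X)$ with fixed representatives $\alpha(m)=[\operatorname{dom}\alpha_m,\iota_m,\alpha_m]$. A global action of $M$ on $Y$ is a partial action datum with $\beta(m)=[Y,\mathrm{id}_Y,\beta_m]$ for all $m$, $\beta_e=\mathrm{id}_Y$, $\beta_n\circ\beta_m=\beta_{nm}$. Given data $\alpha$ on $X$ and $\beta$ on $Y$ with representatives $[\operatorname{dom}\alpha_m,\iota_m,\alpha_m]$, $[\operatorname{dom}\beta_m,\kappa_m,\beta_m]$, a datum morphism $\alpha\to\beta$ is a morphism $f\colon X\to Y$ such that for each $m$ there is $f_m\colon\operatorname{dom}\alpha_m\to\operatorname{dom}\beta_m$ with $\kappa_m\circ f_m=f\circ\iota_m$ and $\beta_m\circ f_m=f\circ\alpha_m$. $\mathrm{Datum}_M(\mathscr{C})$ is the category of partial action data and datum morphisms (composition from $\mathscr{C}$), and $\mathrm{Act}_M(\mathscr{C})$ its full subcategory of global actions. A reflection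 of $\alpha$ in $\mathrm{Act}_M(\mathscr{C})$ is a datum morphism $r\colon\alpha\to\beta$ with $\beta$ global such that for every datum morphism $f\colon\alpha\to\gamma$ with $\gamma$ global there is a unique datum morphism $f'\colon\beta\to\gamma$ with $f'\circ r=f$. Given a global action $\beta$ on $Y$ and a monomorphism $\iota\colon X\to Y$, the restriction of $\beta$ to $X$ via $\iota$ is the partial action datum $\alpha$ on $X$ such that for each $m$ the square $\beta_m\circ\iota\circ\iota_m=\iota\circ\alpha_m$ is a pullback. A globalization of $\alpha$ is a pair $(\beta,\iota)$ with $\beta$ a global action on some $Y$ and $\iota\colon X\to Y$ a monomorphism such that $\alpha$ is the restriction of $\beta$ to $X$ via $\iota$ (then $\iota$ is a datum morphism $\alpha\to\beta$). A universal globalization of $\alpha$ is a globalization $(\beta,\iota)$ such that for every globalization $(\gamma,\kappa)$ of $\alpha$ there is a unique datum morphism $\kappa'\colon\beta\to\gamma$ with $\kappa'\circ\iota=\kappa$. *)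

Record Category := {
  Ob :> Type;
  Hom : Ob -> Ob -> Type;
  cid : forall X, Hom X X;
  comp : forall X Y Z, Hom Y Z -> Hom X Y -> Hom X Z;
  comp_assoc : forall X Y Z W (h : Hom Z W) (g : Hom Y Z) (f : Hom X Y),
      comp _ _ _ h (comp _ _ _ g f) = comp _ _ _ (comp _ _ _ h g) f;
  comp_id_l : forall X Y (f : Hom X Y), comp _ _ _ (cid Y) f = f;
  comp_id_r : forall X Y (f : Hom X Y), comp _ _ _ f (cid X) = f
}.

Arguments Hom {C} : rename.
Arguments cid {C} X : rename.
Arguments comp {C X Y Z} : rename.

Notation "g \o f" := (comp g f) (at level 40, left associativity).

Definition is_mono {C : Category} {X Y : C} (f : Hom X Y) : Prop :=
  forall Z (g h : Hom Z X), f \o g = f \o h -> g = h.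

Definition is_iso {C : Category} {X Y : C} (f : Hom X Y) : Prop :=
  exists g : Hom Y X, g \o f = cid X /\ f \o g = cid Y.

Definition is_pullback {C : Category} {P A B Z : C}
  (p1 : Hom P A) (p2 : Hom P B) (f : Hom A Z) (g : Hom B Z) : Prop :=
  f \o p1 = g \o p2 /\
  forall (Q : C) (q1 : Hom Q A) (q2 : Hom Q B),
    f \o q1 = g \o q2 ->
    exists! u : Hom Q P, p1 \o u = q1 /\ p2 \o u = q2.

Definition has_pullbacks (C : Category) : Prop :=
  forall (A B Z : C) (f : Hom A Z) (g : Hom B Z),
    exists (P : C) (p1 : Hom P A) (p2 : Hom P B), is_pullback p1 p2 f g.

Record Monoid := {
  mcar :> Type;
  mop : mcar -> mcar -> mcar;
  munit : mcar;
  mop_assoc : forall a b c, mop a (mop b c) = mop (mop a b) c;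
  mop_unit_l : forall a, mop munit a = a;
  mop_unit_r : forall a, mop a munit = a
}.

Arguments mop {M} : rename.
Arguments munit {M} : rename.

(* A partial action datum of M on X, with fixed representatives
   alpha(m) = [dom m, iota m, act m], iota m a monomorphism. *)
Record Datum (M : Monoid) (C : Category) := {
  dcar : C;
  ddom : M -> C;
  diota : forall m, Hom (ddom m) dcar;
  diota_mono : forall m, is_mono (diota m);
  dact : forall m, Hom (ddom m) dcar
}.

Arguments dcar {M C}.
Arguments diota_mono {M C}.
Arguments ddom {M C}.
Arguments diota {M C}.
Arguments dact {M C}.

Record GAct (M : Monoid) (C : Category) := {
  gcar : C;
  gact : M -> Hom gcar gcar;
  gact_unit : gact munit = cid gcar;
  gact_mul : forall n m, gact n \o gact m = gact (mop n m)
}.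

Arguments gcar {M C}.
Arguments gact {M C}.

Lemma id_mono {C : Category} (Y : C) : is_mono (cid Y).
Proof. intros Z g h H. rewrite !comp_id_l in H. exact H. Qed.

Definition gdatum {M : Monoid} {C : Category} (b : GAct M C) : Datum M C :=
  {| dcar := gcar b;
     ddom := fun _ => gcar b;
     diota := fun _ => cid (gcar b);
     diota_mono := fun _ => @id_mono C (gcar b);
     dact := gact b |}.

Definition is_datum_mor {M : Monoid} {C : Category} (a b : Datum M C)
  (f : Hom (dcar a) (dcar b)) : Prop :=
  forall m, exists fm : Hom (ddom a m) (ddom b m),
    diota b m \o fm = f \o diota a m /\ dact b m \o fm = f \o dact a m.

Definition is_reflection {M : Monoid} {C : Category} (a : Datum M C)
  (b : GAct M C) (r : Hom (dcar a) (gcar b)) : Prop :=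
  is_datum_mor a (gdatum b) r /\
  forall (c : GAct M C) (f : Hom (dcar a) (gcar c)),
    is_datum_mor a (gdatum c) f ->
    exists! f' : Hom (gcar b) (gcar c),
      is_datum_mor (gdatum b) (gdatum c) f' /\ f' \o r = f.

Definition is_restriction {M : Monoid} {C : Category} (a : Datum M C)
  (b : GAct M C) (i : Hom (dcar a) (gcar b)) : Prop :=
  forall m, is_pullback (diota a m) (dact a m) (gact b m \o i) i.

Definition is_globalization {M : Monoid} {C : Category} (a : Datum M C)
  (b : GAct M C) (i : Hom (dcar a) (gcar b)) : Prop :=
  is_mono i /\ is_restriction a b i.

Definition is_universal_globalization {M : Monoid} {C : Category}
  (a : Datum M C) (b : GAct M C) (i : Hom (dcar a) (gcar b)) : Prop :=
  is_globalization a b i /\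
  forall (c : GAct M C) (k : Hom (dcar a) (gcar c)),
    is_globalization a c k ->
    exists! k' : Hom (gcar b) (gcar c),
      is_datum_mor (gdatum b) (gdatum c) k' /\ k' \o i = k.


(* Everything rests on two facts about pullbacks in an arbitrary category:
   - a commutative square whose legs, post-composed with a common morphism h,
     form a pullback, is itself a pullback (post-composition reflects
     pullbacks);
   - if f is pulled back along itself and one projection is monic, then f is
     monic.
   For (iv) => (v): a globalization (gamma, kappa) factors through the
   reflection as kappa = kappa' o iota with kappa' equivariant, so the
   squares for beta become the pullback squares for gamma after
   post-composition with kappa'.  For (v) => (i): the square at the unit e
   exhibits iota as monic, so the restriction is a globalization.  For
   (i) => (ii): every globalization is in particular a datum morphism, so
   universality is the reflection property. *)

Lemma pullback_reflect_postcomp {C : Category} {P A B Z W : C}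
  (p1 : Hom P A) (p2 : Hom P B) (f : Hom A Z) (g : Hom B Z) (h : Hom Z W) :
  f \o p1 = g \o p2 ->
  is_pullback p1 p2 (h \o f) (h \o g) ->
  is_pullback p1 p2 f g.
Proof.
  intros Hsq [_ Hpb]. split; [exact Hsq|].
  intros Q q1 q2 Hq. apply Hpb.
  rewrite <- !comp_assoc, Hq. reflexivity.
Qed.

(* If f is pulled back along itself and the first projection is monic,
   then f is monic (the two projections of its kernel pair coincide). *)
Lemma kernel_pair_mono {C : Category} {P A Z : C}
  (p1 p2 : Hom P A) (f : Hom A Z) :
  is_mono p1 -> is_pullback p1 p2 f f -> is_mono f.
Proof.
  intros Hp1 [_ Hpb].
  destruct (Hpb A (cid A) (cid A) eq_refl) as [d [[Hd1 Hd2] _]].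
  assert (Hsec : d \o p1 = cid P).
  { apply Hp1. rewrite comp_assoc, Hd1, comp_id_l, comp_id_r. reflexivity. }
  assert (Hproj : p2 = p1).
  { rewrite <- (comp_id_r _ _ _ p2), <- Hsec, comp_assoc, Hd2, comp_id_l.
    reflexivity. }
  intros Q g h Hgh.
  destruct (Hpb Q g h Hgh) as [u [[Hu1 Hu2] _]].
  rewrite <- Hu1, <- Hu2, Hproj. reflexivity.
Qed.

Lemma datum_mor_square {M : Monoid} {C : Category} (a : Datum M C)
  (c : GAct M C) (f : Hom (dcar a) (gcar c)) :
  is_datum_mor a (gdatum c) f ->
  forall m, (gact c m \o f) \o diota a m = f \o dact a m.
Proof.
  intros Hf m. destruct (Hf m) as [fm [Hdom Hact]]. simpl in *.
  rewrite comp_id_l in Hdom. subst fm.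
  rewrite <- comp_assoc. exact Hact.
Qed.

Lemma square_datum_mor {M : Monoid} {C : Category} (a : Datum M C)
  (c : GAct M C) (f : Hom (dcar a) (gcar c)) :
  (forall m, (gact c m \o f) \o diota a m = f \o dact a m) ->
  is_datum_mor a (gdatum c) f.
Proof.
  intros Hsq m. exists (f \o diota a m). simpl. split.
  - apply comp_id_l.
  - rewrite comp_assoc. apply Hsq.
Qed.

Lemma global_datum_mor_equivariant {M : Monoid} {C : Category}
  (b c : GAct M C) (f : Hom (gcar b) (gcar c)) :
  is_datum_mor (gdatum b) (gdatum c) f ->
  forall m, gact c m \o f = f \o gact b m.
Proof.
  intros Hf m. destruct (Hf m) as [fm [Hdom Hact]]. simpl in *.
  rewrite comp_id_l, comp_id_r in Hdom. subst fm. exact Hact.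
Qed.

Lemma restriction_datum_mor {M : Monoid} {C : Category} (a : Datum M C)
  (c : GAct M C) (k : Hom (dcar a) (gcar c)) :
  is_restriction a c k -> is_datum_mor a (gdatum c) k.
Proof.
  intros Hres. apply square_datum_mor. intro m. apply (Hres m).
Qed.

(* (v) => (i): the restriction condition alone forces the map to be monic,
   via the pullback square at the unit, where beta_e = id. *)
Lemma restriction_is_globalization {M : Monoid} {C : Category}
  (a : Datum M C) (b : GAct M C) (i : Hom (dcar a) (gcar b)) :
  is_restriction a b i -> is_globalization a b i.
Proof.
  intros Hres. split; [|exact Hres].
  pose proof (Hres munit) as Hunit.
  rewrite gact_unit, comp_id_l in Hunit.
  exact (kernel_pair_mono _ _ _ (diota_mono a munit) Hunit).
Qed.

(* (i) => (ii): for a reflection, universality among globalizations is an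
   instance of universality among all datum morphisms. *)
Lemma reflection_globalization_universal {M : Monoid} {C : Category}
  (a : Datum M C) (b : GAct M C) (i : Hom (dcar a) (gcar b)) :
  is_reflection a b i -> is_globalization a b i ->
  is_universal_globalization a b i.
Proof.
  intros [_ Huniv] Hglob. split; [exact Hglob|].
  intros c k [_ Hres]. apply Huniv. exact (restriction_datum_mor a c k Hres).
Qed.

(* (iv) => (v): if some globalization (gamma, kappa) exists, factor it as
   kappa = kappa' o iota through the reflection; post-composing the squares
   for beta with the equivariant kappa' gives the pullbacks for gamma. *)
Lemma globalization_reflection_restricts {M : Monoid} {C : Category}
  (a : Datum M C) (b : GAct M C) (i : Hom (dcar a) (gcar b))
  (c : GAct M C) (k : Hom (dcar a) (gcar c)) :
  is_reflection a b i -> is_globalization a c k -> is_restriction a b i.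
Proof.
  intros [Hi Huniv] [_ Hres] m.
  destruct (Huniv c k (restriction_datum_mor a c k Hres))
    as [k' [[Hk'equiv Hfactor] _]].
  apply (pullback_reflect_postcomp _ _ _ _ k').
  - exact (datum_mor_square a b i Hi m).
  - assert (Hleg : k' \o (gact b m \o i) = gact c m \o k).
    { rewrite <- Hfactor, !comp_assoc,
        (global_datum_mor_equivariant b c k' Hk'equiv m).
      reflexivity. }
    rewrite Hleg, Hfactor. exact (Hres m).
Qed.

Theorem mainTheorem4 (M : Monoid) (C : Category) (HC : has_pullbacks C)
  (a : Datum M C) (b : GAct M C) (i : Hom (dcar a) (gcar b))
  (Hrefl : is_reflection a b i) :
  (is_globalization a b i <-> is_universal_globalization a b i) /\
  (is_universal_globalization a b i <->
     exists (c : GAct M C) (k : Hom (dcar a) (gcar c)),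
       is_universal_globalization a c k) /\
  ((exists (c : GAct M C) (k : Hom (dcar a) (gcar c)),
       is_universal_globalization a c k) <->
   (exists (c : GAct M C) (k : Hom (dcar a) (gcar c)),
       is_globalization a c k)) /\
  ((exists (c : GAct M C) (k : Hom (dcar a) (gcar c)),
       is_globalization a c k) <->
   (forall m : M,
       is_pullback (diota a m) (dact a m) (gact b m \o i) i)).
Proof.
  assert (iv_ii : (exists (c : GAct M C) (k : Hom (dcar a) (gcar c)),
                      is_globalization a c k) ->
                  is_universal_globalization a b i).
  { intros [c [k Hglob]].
    apply (reflection_globalization_universal a b i Hrefl).
    apply restriction_is_globalization.
    exact (globalization_reflection_restricts a b i c k Hrefl Hglob). }
  split; [|split; [|split]].
  - split; [exact (reflection_globalization_universal a b i Hrefl)|].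
    intros [Hglob _]. exact Hglob.
  - split; [intros Huniv; exists b, i; exact Huniv|].
    intros [c [k [Hglob _]]]. apply iv_ii. exists c, k. exact Hglob.
  - split; [intros [c [k [Hglob _]]]; exists c, k; exact Hglob|].
    intros Hex. exists b, i. exact (iv_ii Hex).
  - split.
    + intros [c [k Hglob]].
      exact (globalization_reflection_restricts a b i c k Hrefl Hglob).
    + intros Hres. exists b, i. exact (restriction_is_globalization a b i Hres).
Qed.
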